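(* For every positive integer $n$, $$\sum_{k=0}^{n-1}\binom{n}{k}^{-2}=\frac{(n+1)!\,(n+1)^2}{(n+\frac{3}{2})!\,4^n}\sum_{j=0}^{n-1}\frac{(3j^3+12j^2+18j+10)\,4^j\,(j+\frac32)!}{(j+1)^2\,(j+1)!\,(j+2)^3}.$$
   Context: Here factorials of non-integers are defined via the Gamma function: $x!:=\Gamma(x+1)$ for all real $x>-1$. *)

From HB Require Import structures.
From mathcomp Require Import all_boot all_order all_algebra.
From mathcomp Require Import all_classical all_reals all_analysis.
Set Implicit Arguments. Unset Strict Implicit. Unset Printing Implicit Defensive.
Import Order.TTheory GRing.Theory Num.Theory.
Local Open Scope classical_set_scope.
Local Open Scope ring_scope.

Definition Gamma {R : realType} (s : R) : R :=
  fine (\int[@lebesgue_measure R]_(x in `]0%R, +oo[) ((x `^ (s - 1)) * expR (- x))%:E)%E.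

Definition rfact {R : realType} (x : R) : R := Gamma (x + 1).

(* Writing S(n) for the left-hand side, the Zeilberger certificate
   G(n, k) = (n+1)^2 (2k - 3n - 6) / C(n+1, k)^2 telescopes to the first-order
   recurrence 2 (2n+5) (n+1)^2 S(n+1) = (n+2)^3 S(n) + 3n^3 + 12n^2 + 18n + 10.
   The right-hand side satisfies the same recurrence because
   (n + 5/2)! = (n + 5/2) (n + 3/2)!, and both sides vanish at n = 0.
   The functional equation Gamma(s+1) = s Gamma(s) behind this is proved by
   integrating by parts.  Positivity of (n + 3/2)! reduces to that of Gamma on
   [1, 3], where the Gamma integral is finite because x^(s-1) e^(-x) is
   dominated by a multiple of e^(-x/2). *)

From HB Require Import structures.
From mathcomp Require Import all_boot all_order all_algebra.
From mathcomp Require Import all_classical all_reals all_analysis.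
From mathcomp Require Import measurable_realfun lra ring.
Import Order.TTheory GRing.Theory Num.Theory.
Import numFieldNormedType.Exports.
Local Open Scope classical_set_scope.
Local Open Scope ring_scope.

Section GammaFunction.
Variable R : realType.
Local Notation mu := (@lebesgue_measure R).

Definition gamma_integrand (a x : R) : R := x `^ a * expR (- x).

Lemma gamma_integrand_ge0 (a x : R) : 0 <= gamma_integrand a x.
Proof. by rewrite mulr_ge0 ?powR_ge0 ?expR_ge0. Qed.

Lemma gamma_integrand0 (a : R) : a != 0 -> gamma_integrand a 0 = 0.
Proof. by move=> a_neq0; rewrite /gamma_integrand powR0 ?mul0r. Qed.

Lemma gamma_integrandS (a x : R) : 0 <= x -> 0 < a ->
  gamma_integrand a x = x * gamma_integrand (a - 1) x.
Proof. by move=> x_ge0 a_gt0; rewrite /gamma_integrand mulrA mulr_powRB1. Qed.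

Lemma measurable_gamma_integrand (a : R) : measurable_fun setT (gamma_integrand a).
Proof. by apply: measurable_funM => //; apply: measurableT_comp. Qed.

Lemma measurable_EFin_gamma_integrand (a : R) (D : set R) :
  measurable_fun D (EFin \o gamma_integrand a).
Proof.
by apply/measurable_EFinP; apply: measurable_funS (measurable_gamma_integrand a).
Qed.

Lemma continuous_expRN : continuous (fun x : R => expR (- x)).
Proof.
move=> x; apply: continuous_comp; last exact: continuous_expR.
exact: (@continuousN _ R^o).
Qed.

Lemma continuous_gamma_integrand (a x : R) : 0 < x ->
  {for x, continuous (gamma_integrand a)}.
Proof.
move=> x_gt0; apply: continuousM; last exact: continuous_expRN.
apply: differentiable_continuous; apply/derivable1_diffP.
by apply: derivable_powR; rewrite in_itv/= x_gt0.
Qed.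

Lemma gamma_integrand_cvg0 (a : R) : 0 < a ->
  gamma_integrand a x @[x --> 0^'+] --> gamma_integrand a 0.
Proof.
move=> a_gt0; rewrite gamma_integrand0 ?gt_eqF//.
have := cvgM (powR_cvg0 a_gt0) (cvg_at_right_filter (continuous_expRN 0)).
by rewrite mul0r; apply.
Qed.

Lemma is_derive_gamma_integrand (a x : R) : 0 < x ->
  is_derive x 1 (gamma_integrand a)
    (a * gamma_integrand (a - 1) x - gamma_integrand a x).
Proof.
move=> x_gt0.
have dexpRN : is_derive x 1 (fun y : R => expR (- y)) (- expR (- x)).
  by apply: is_derive_eq; rewrite mulrN1.
have := is_deriveM (is_derive1_powR a x_gt0) dexpRN.
rewrite /gamma_integrand => dM; apply: is_derive_eq.
by rewrite /GRing.scale /= mulrN addrC mulrC -mulrA.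
Qed.

Lemma gamma_integrand_cvgy (a : R) : gamma_integrand a x @[x --> +oo] --> 0.
Proof.
pose N := Num.truncn a.
pose c : R := (N.+2)`!%:R.
have c_gt0 : 0 < c by rewrite ltr0n fact_gt0.
have invx_cvg0 : (fun x : R => x^-1) @ +oo --> 0.
  by apply/gtr0_cvgV0; [near=> x | exact: cvg_id].
apply: (@squeeze_cvgr _ _ _ _ (fun=> 0) (fun x => c * x^-1)); last 2 first.
- exact: cvg_cst.
- by rewrite -(mulr0 c); apply: cvgM => //; exact: cvg_cst.
(* For x >= 1: x^a e^-x <= x^(N+1) e^-x <= (N+2)! / x, by the Taylor bound
   x^(N+2) / (N+2)! <= e^x. *)
near=> x.
have x_ge1 : 1 <= x by near: x; apply: nbhs_pinfty_ge.
have x_gt0 : 0 < x := lt_le_trans ltr01 x_ge1.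
rewrite gamma_integrand_ge0 /=.
apply: (@le_trans _ _ (x ^+ N.+1 * expR (- x))).
  apply: ler_wpM2r; first exact: expR_ge0.
  rewrite -powR_mulrn; last exact: ltW.
  apply: (ler_powR x_ge1).
  exact/ltW/truncnS_gt.
have := expR_ge1Dxn N.+1 (ltW x_gt0); rewrite expRN => expR_ge.
have expRx_gt0 : 0 < expR x := expR_gt0 x.
rewrite ler_pdivlMr// mulrAC ler_pdivrMr// -exprSr.
rewrite -ler_pdivrMl// mulrC; apply: le_trans expR_ge.
by rewrite lerDr.
Unshelve. all: end_near. Qed.

Lemma gamma_integrand_derivE (a x : R) : 0 <= x -> 0 < a ->
  a * gamma_integrand (a - 1) x - gamma_integrand a x
  = (a - x) * gamma_integrand (a - 1) x.
Proof.
by move=> x_ge0 a_gt0; rewrite [gamma_integrand a x]gamma_integrandS // mulrBl.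
Qed.

Lemma ge0_integral_itvcy_split (f : R -> R) {a b : R} : a <= b ->
  measurable_fun setT f -> (forall x, 0 <= f x) ->
  (\int[mu]_(x in `[a, +oo[) (f x)%:E =
   \int[mu]_(x in `[a, b]) (f x)%:E + \int[mu]_(x in `[b, +oo[) (f x)%:E)%E.
Proof.
move=> le_ab mf f_ge0.
rewrite (@itv_bndbnd_setU _ _ (BLeft a) (BRight b) +oo%O) ?bnd_simp//.
rewrite ge0_integral_setU //=.
- rewrite integral_itv_obnd_cbnd //.
  by apply/measurable_EFinP; apply: measurable_funS mf.
- by apply/measurable_EFinP; apply: measurable_funS mf.
- by move=> x _; rewrite lee_fin.
- rewrite disj_set2E; apply/eqP/seteqP; split => x //=.
  rewrite !in_itv/= => -[/andP[_ xb] /andP[bx _]].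
  by move: (lt_le_trans bx xb); rewrite ltxx.
Qed.

Section GammaIntegrandByParts.
Variable a : R.
Hypothesis a_gt1 : 1 < a.

Let a_gt0 : 0 < a. Proof. exact: lt_trans a_gt1. Qed.
Let a_ge0 : 0 <= a. Proof. exact: ltW. Qed.

Let agamma (x : R) := a * gamma_integrand (a - 1) x.
Let dgamma (x : R) := agamma x - gamma_integrand a x.

Let agamma_ge0 (x : R) : 0 <= agamma x.
Proof. by rewrite mulr_ge0 ?gamma_integrand_ge0. Qed.

Let measurable_agamma : measurable_fun setT agamma.
Proof. by apply: measurable_funM => //; exact: measurable_gamma_integrand. Qed.

Let measurable_dgamma : measurable_fun setT dgamma.
Proof. by apply: measurable_funB => //; exact: measurable_gamma_integrand. Qed.

Let dgamma_ge0 (x : R) : 0 <= x <= a -> 0 <= dgamma x.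
Proof.
move=> /andP[x_ge0 le_xa]; rewrite /dgamma /agamma gamma_integrand_derivE//.
by rewrite mulr_ge0 ?gamma_integrand_ge0// subr_ge0.
Qed.

Let dgamma_le0 (x : R) : a <= x -> dgamma x <= 0.
Proof.
move=> le_ax; rewrite /dgamma /agamma gamma_integrand_derivE ?(le_trans a_ge0)//.
by rewrite mulr_le0_ge0 ?gamma_integrand_ge0// subr_le0.
Qed.

Let continuous_dgamma (x : R) : 0 < x -> {for x, continuous dgamma}.
Proof.
move=> x_gt0; apply: continuousD; last exact/continuousN/continuous_gamma_integrand.
by apply: continuousM; [exact: cst_continuous | exact: continuous_gamma_integrand].
Qed.

Let dgamma_cvg0 : dgamma x @[x --> 0^'+] --> dgamma 0.
Proof.
apply: cvgB; last exact: gamma_integrand_cvg0.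
by apply: cvgM; [exact: cvg_cst | apply: gamma_integrand_cvg0; rewrite subr_gt0].
Qed.

Let integral_dgamma_head :
  (\int[mu]_(x in `[0%R, a]) (dgamma x)%:E = (gamma_integrand a a)%:E)%E.
Proof.
rewrite (@continuous_FTC2 _ dgamma (gamma_integrand a) 0 a a_gt0).
- by rewrite gamma_integrand0 ?gt_eqF// sube0.
- apply/(continuous_within_itvP _ a_gt0); split.
  + by move=> x; rewrite in_itv/= => /andP[x_gt0 _]; exact: continuous_dgamma.
  + exact: dgamma_cvg0.
  + by apply: cvg_at_left_filter; exact: continuous_dgamma.
- split.
  + move=> x; rewrite in_itv/= => /andP[x_gt0 _].
    by case: (is_derive_gamma_integrand a x x_gt0).
  + exact: gamma_integrand_cvg0.
  + by apply: cvg_at_left_filter; exact: continuous_gamma_integrand.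
- move=> x; rewrite in_itv/= => /andP[x_gt0 _].
  by rewrite derive1E; case: (is_derive_gamma_integrand a x x_gt0).
Qed.

Let integral_dgamma_tail :
  (\int[mu]_(x in `[a, +oo[) (- dgamma x)%:E = (gamma_integrand a a)%:E)%E.
Proof.
rewrite (@ge0_continuous_FTC2y _ (fun x => - dgamma x)
  (fun x => - gamma_integrand a x) a 0).
- by rewrite sub0e EFinN oppeK.
- by move=> x le_ax; rewrite oppr_ge0 dgamma_le0.
- apply/continuous_within_itvcyP; split.
    move=> x; rewrite in_itv/= andbT => lt_ax.
    exact/continuousN/continuous_dgamma/(lt_trans a_gt0).
  exact/cvg_at_right_filter/continuousN/continuous_dgamma.
- by rewrite -oppr0; apply: cvgN; exact: gamma_integrand_cvgy.
- move=> x lt_ax; apply: derivableN.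
  by case: (is_derive_gamma_integrand a x (lt_trans a_gt0 lt_ax)).
- exact/cvg_at_right_filter/continuousN/continuous_gamma_integrand.
- move=> x; rewrite in_itv/= andbT => lt_ax.
  have [derivable_gamma Dgamma] :=
    is_derive_gamma_integrand a x (lt_trans a_gt0 lt_ax).
  by rewrite derive1E deriveN // Dgamma.
Qed.

Let integral_agamma_head :
  (\int[mu]_(x in `[0%R, a]) (agamma x)%:E =
   \int[mu]_(x in `[0%R, a]) (gamma_integrand a x)%:E + (gamma_integrand a a)%:E)%E.
Proof.
rewrite -integral_dgamma_head -ge0_integralD //=.
- by apply: eq_integral => x _; rewrite /dgamma -EFinD addrCA subrr addr0.
- by move=> x _; rewrite lee_fin gamma_integrand_ge0.
- exact: measurable_EFin_gamma_integrand.
- by apply/measurable_EFinP; apply: measurable_funS measurable_dgamma.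
Qed.

Let integral_gamma_integrand_tail :
  (\int[mu]_(x in `[a, +oo[) (gamma_integrand a x)%:E =
   \int[mu]_(x in `[a, +oo[) (agamma x)%:E + (gamma_integrand a a)%:E)%E.
Proof.
rewrite -integral_dgamma_tail -ge0_integralD //=.
- by apply: eq_integral => x _; rewrite /dgamma -EFinD opprB addrCA subrr addr0.
- by move=> x _; rewrite lee_fin.
- by apply/measurable_EFinP; apply: measurable_funS measurable_agamma.
- by move=> x; rewrite in_itv/= andbT lee_fin oppr_ge0 => /dgamma_le0.
- apply/measurable_EFinP.
  by apply: measurable_funS (measurable_funN measurable_dgamma).
Qed.

(* The derivative [dgamma] of [gamma_integrand a] changes sign at [a], and the
   fundamental theorem of calculus for Lebesgue integrals needs a sign, so the
   integration by parts is done separately on [0, a] and [a, +oo[. *)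
Lemma integral_gamma_integrandS :
  (\int[mu]_(x in `[0%R, +oo[) (gamma_integrand a x)%:E =
   a%:E * \int[mu]_(x in `[0%R, +oo[) (gamma_integrand (a - 1) x)%:E)%E.
Proof.
have -> : (a%:E * \int[mu]_(x in `[0%R, +oo[) (gamma_integrand (a - 1) x)%:E =
    \int[mu]_(x in `[0%R, +oo[) (agamma x)%:E)%E.
  rewrite -ge0_integralZl_EFin //.
  - by move=> x _; rewrite lee_fin gamma_integrand_ge0.
  - exact: measurable_EFin_gamma_integrand.
rewrite (ge0_integral_itvcy_split _ a_ge0 (measurable_gamma_integrand a)
  (gamma_integrand_ge0 a)).
rewrite (ge0_integral_itvcy_split _ a_ge0 measurable_agamma agamma_ge0).
by rewrite integral_agamma_head integral_gamma_integrand_tail addeAC addeA.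
Qed.

End GammaIntegrandByParts.

Lemma Gamma_integral (s : R) :
  Gamma s = fine (\int[mu]_(x in `[0%R, +oo[) (gamma_integrand (s - 1) x)%:E)%E.
Proof.
rewrite /Gamma -integral_itv_obnd_cbnd //.
exact: measurable_EFin_gamma_integrand.
Qed.

Lemma GammaD1 (s : R) : 1 < s -> Gamma (s + 1) = s * Gamma s.
Proof.
move=> s_gt1; rewrite !Gamma_integral addrK integral_gamma_integrandS //.
set I := (\int[mu]_(x in _) _)%E.
have I_ge0 : (0 <= I)%E.
  by apply: integral_ge0 => x _; rewrite lee_fin gamma_integrand_ge0.
have [I_fin|] := boolP (I \is a fin_num); first by rewrite fineM.
(* A divergent integral would make both sides [fine +oo = 0]. *)
rewrite ge0_fin_numE // -leNgt leye_eq => /eqP ->.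
by rewrite gt0_muley ?lte_fin ?(lt_trans ltr01) //= mulr0.
Qed.

Lemma gamma_integrand_le_exponential_pdf (a x : R) : 0 <= a <= 2 -> 0 <= x ->
  gamma_integrand a x <= 16 * exponential_pdf 2^-1 x.
Proof.
move=> /andP[a_ge0 a_le2] x_ge0; rewrite exponential_pdfE //=.
have powR_le : x `^ a <= 1 + x ^+ 2.
  have [x_le1|x_gt1] := leP x 1.
    apply: (@le_trans _ _ 1); last by rewrite lerDl sqr_ge0.
    rewrite [leRHS](_ : 1 = 1 `^ a); last by rewrite powR1.
    by rewrite ge0_ler_powR ?nnegrE.
  apply: (@le_trans _ _ (x ^+ 2)); last by rewrite lerDr.
  by rewrite -powR_mulrn // ler_powR // ltW.
have sqr_le : 1 + x ^+ 2 <= 8 * expR (2^-1 * x).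
  have halfx_ge0 : 0 <= 2^-1 * x by rewrite mulr_ge0 // invr_ge0.
  have := expR_ge1Dxn 1 halfx_ge0.
  rewrite exprMn (_ : 2`!%:R = 2 :> R) //.
  have := sqr_ge0 x; lra.
have -> : 16 * (2^-1 * expR (- 2^-1 * x)) = 8 * expR (2^-1 * x) * expR (- x).
  by rewrite -mulrA -expRD mulrA; congr (_ * expR _); lra.
by rewrite ler_wpM2r ?expR_ge0 // (le_trans powR_le sqr_le).
Qed.

Lemma integral_gamma_integrand_lty (a : R) : 0 <= a <= 2 ->
  (\int[mu]_(x in `[0%R, +oo[) (gamma_integrand a x)%:E < +oo)%E.
Proof.
move=> a_02; have rate_gt0 : (0 : R) < 2^-1 by rewrite invr_gt0.
pose q := @exponential_pdf R 2^-1.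
have mq : measurable_fun setT q by exact: measurable_exponential_pdf.
have q_ge0 x : 0 <= q x by apply: exponential_pdf_ge0; exact: ltW.
apply: (@le_lt_trans _ _ (\int[mu]_(x in `[0%R, +oo[) ((16 * q x)%:E))%E).
  apply: ge0_le_integral => //.
  - by move=> x _; rewrite lee_fin gamma_integrand_ge0.
  - exact: measurable_EFin_gamma_integrand.
  - by apply/measurable_EFinP; apply: measurable_funS (measurable_funM _ mq).
  - move=> x; rewrite /= in_itv/= andbT => x_ge0.
    by rewrite lee_fin gamma_integrand_le_exponential_pdf.
under eq_integral do rewrite EFinM.
rewrite ge0_integralZl_EFin //; last 2 first.
- by move=> x _; rewrite lee_fin.
- by apply/measurable_EFinP; apply: measurable_funS mq.
apply: (@le_lt_trans _ _ (16%:E * \int[mu]_x (q x)%:E))%E.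
  rewrite lee_pmul2l //; apply: ge0_subset_integral => //.
  - exact/measurable_EFinP.
  - by move=> x _; rewrite lee_fin.
by rewrite integral_exponential_pdf // mule1 ltry.
Qed.

Lemma integral_gamma_integrand_gt0 (a : R) : 0 <= a ->
  (0 < \int[mu]_(x in `[0%R, +oo[) (gamma_integrand a x)%:E)%E.
Proof.
move=> a_ge0.
apply: (@lt_le_trans _ _
  (\int[mu]_(x in `[1%R, 2%R]) (gamma_integrand a x)%:E)%E); last first.
  apply: ge0_subset_integral => //.
  - exact: measurable_EFin_gamma_integrand.
  - by move=> x _; rewrite lee_fin gamma_integrand_ge0.
  - by move=> x; rewrite /= !in_itv/= => /andP[x_ge1 _]; rewrite (le_trans _ x_ge1).
apply: (@lt_le_trans _ _ (\int[mu]_(x in `[1%R, 2%R]) (expR (-2))%:E)%E).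
  rewrite integral_cst //.
  have := @lebesgue_measure_itv R `[1%R, 2%R]; rewrite /= lte_fin ltr1n => ->.
  rewrite -EFinD -EFinM lte_fin.
  by rewrite mulr_gt0 ?expR_gt0 // subr_gt0 ltr1n.
apply: ge0_le_integral => //.
- exact: measurable_EFin_gamma_integrand.
- move=> x; rewrite /= in_itv/= => /andP[x_ge1 x_le2]; rewrite lee_fin.
  rewrite -[leLHS]mul1r ler_pM ?expR_ge0 // ?ler_expR ?lerN2 //.
  by rewrite -[leLHS](powRr0 x) ler_powR.
Qed.

Lemma Gamma_gt0 (s : R) : 1 <= s <= 3 -> 0 < Gamma s.
Proof.
move=> /andP[s_ge1 s_le3]; rewrite Gamma_integral.
have [s1_ge0 s1_le2] : 0 <= s - 1 /\ s - 1 <= 2 by split; lra.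
apply: fine_gt0.
by rewrite integral_gamma_integrand_gt0 ?integral_gamma_integrand_lty ?s1_ge0.
Qed.

Lemma rfactD1 (x : R) : 0 < x -> rfact (x + 1) = (x + 1) * rfact x.
Proof. by move=> x_gt0; rewrite /rfact GammaD1 // ltrDr. Qed.

Lemma rfact_gt0 (x : R) : 0 <= x -> 0 < rfact x.
Proof.
move=> x_ge0; move: (Num.truncn x).+1 (ltW (truncnS_gt x)) => n.
elim: n x x_ge0 => [|n IHn] x x_ge0 x_le_n.
  by rewrite /rfact Gamma_gt0 //; lra.
have [x_le2|x_gt2] := leP x 2; first by rewrite /rfact Gamma_gt0 //; lra.
have x1_gt0 : 0 < x - 1 by lra.
rewrite -(subrK 1 x) rfactD1 // subrK mulr_gt0 //; first lra.
by apply: IHn; [exact: ltW | move: x_le_n; rewrite -natr1; lra].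
Qed.

End GammaFunction.

Local Close Scope classical_set_scope.

Lemma first_order_recurrence_uniq {R : idomainType} {a b c u v : nat -> R} :
  (forall n, a n != 0) ->
  (forall n, a n * u n.+1 = b n * u n + c n) ->
  (forall n, a n * v n.+1 = b n * v n + c n) ->
  u 0%N = v 0%N -> forall n, u n = v n.
Proof.
move=> a_neq0 urec vrec uv0; elim=> [//|n IHn].
by apply: (mulfI (a_neq0 n)); rewrite urec vrec IHn.
Qed.

Section InverseBinomialSquares.
Variable R : numFieldType.

Definition inv_binom_sq_sum (n : nat) : R :=
  \sum_(0 <= k < n) ('C(n, k)%:R ^+ 2)^-1.

Definition inv_binom_sq_cert (n k : nat) : R :=
  n.+1%:R ^+ 2 * (2 * k%:R - 3 * n%:R - 6) / 'C(n.+1, k)%:R ^+ 2.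

Lemma inv_binom_sq_certS (n k : nat) : (k <= n)%N ->
  inv_binom_sq_cert n k.+1 - inv_binom_sq_cert n k =
  2 * (2 * n%:R + 5) * n.+1%:R ^+ 2 / 'C(n.+1, k)%:R ^+ 2
  - n.+2%:R ^+ 3 / 'C(n, k)%:R ^+ 2.
Proof.
move=> le_kn; rewrite /inv_binom_sq_cert.
have bin_neq0 : 'C(n, k)%:R != 0 :> R by rewrite pnatr_eq0 -lt0n bin_gt0.
have n1k_neq0 : (n.+1 - k)%:R != 0 :> R by rewrite pnatr_eq0 subn_eq0 -ltnNge ltnS.
have binSl : 'C(n.+1, k)%:R = n.+1%:R * 'C(n, k)%:R / (n.+1 - k)%:R :> R.
  by rewrite -natrM (mul_bin_down n.+1 k) natrM mulrAC mulfV ?mul1r.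
have binSS : 'C(n.+1, k.+1)%:R = n.+1%:R * 'C(n, k)%:R / k.+1%:R :> R.
  by rewrite -natrM (mul_bin_diag n.+1 k) natrM mulrAC mulfV ?mul1r ?pnatr_eq0.
rewrite binSl binSS {binSl binSS}.
rewrite (natrB _ (leqW le_kn)) in n1k_neq0 *.
rewrite -[n.+2%:R]natr1 -[k.+1%:R]natr1 -[n.+1%:R]natr1 in n1k_neq0 *.
have k1_neq0 : k%:R + 1 != 0 :> R by rewrite natr1 pnatr_eq0.
have n1_neq0 : n%:R + 1 != 0 :> R by rewrite natr1 pnatr_eq0.
by field; rewrite bin_neq0 n1k_neq0 k1_neq0 n1_neq0.
Qed.

Lemma inv_binom_sq_sumS (n : nat) :
  2 * (2 * n%:R + 5) * n.+1%:R ^+ 2 * inv_binom_sq_sum n.+1 =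
  n.+2%:R ^+ 3 * inv_binom_sq_sum n
  + (3 * n%:R ^+ 3 + 12 * n%:R ^+ 2 + 18 * n%:R + 10).
Proof.
have telescoped : \sum_(0 <= k < n.+1)
      (2 * (2 * n%:R + 5) * n.+1%:R ^+ 2 / 'C(n.+1, k)%:R ^+ 2
       - n.+2%:R ^+ 3 / 'C(n, k)%:R ^+ 2) =
    inv_binom_sq_cert n n.+1 - inv_binom_sq_cert n 0.
  rewrite -(telescope_sumr (inv_binom_sq_cert n)) //.
  by apply: eq_big_nat => k /andP[_ le_kn]; rewrite inv_binom_sq_certS.
rewrite sumrB -!mulr_sumr [X in _ - _ * X]big_nat_recr //= in telescoped.
rewrite binn expr1n invr1 in telescoped.
rewrite /inv_binom_sq_sum -[LHS](subrK (n.+2%:R ^+ 3 *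
  (\sum_(0 <= k < n) ('C(n, k)%:R ^+ 2)^-1 + 1))) telescoped.
rewrite /inv_binom_sq_cert !binn bin0 expr1n !divr1 -[n.+2%:R]natr1 -[n.+1%:R]natr1.
ring.
Qed.

End InverseBinomialSquares.

Section ClosedForm.
Variable R : realType.

Definition inv_binom_sq_closed_form (n : nat) : R :=
  (n.+1)`!%:R * (n.+1)%:R ^+ 2 / (rfact (n%:R + 3 / 2) * 4 ^+ n) *
  \sum_(0 <= j < n)
    ((3 * j%:R ^+ 3 + 12 * j%:R ^+ 2 + 18 * j%:R + 10) * 4 ^+ j
       * rfact (j%:R + 3 / 2 : R)
     / ((j.+1)%:R ^+ 2 * (j.+1)`!%:R * (j.+2)%:R ^+ 3)).

Lemma inv_binom_sq_closed_formS (n : nat) :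
  2 * (2 * n%:R + 5) * n.+1%:R ^+ 2 * inv_binom_sq_closed_form n.+1 =
  n.+2%:R ^+ 3 * inv_binom_sq_closed_form n
  + (3 * n%:R ^+ 3 + 12 * n%:R ^+ 2 + 18 * n%:R + 10).
Proof.
rewrite /inv_binom_sq_closed_form big_nat_recr //=.
have n_ge0 : 0 <= n%:R :> R by [].
rewrite (_ : n.+1%:R + 3 / 2 = n%:R + 3 / 2 + 1); last by rewrite -natr1; lra.
rewrite rfactD1; last lra.
have rfact_neq0 : rfact (n%:R + 3 / 2 : R) != 0 by apply/lt0r_neq0/rfact_gt0; lra.
have fact_neq0 : n.+1`!%:R != 0 :> R by rewrite pnatr_eq0 -lt0n fact_gt0.
have pow4_neq0 : 4 ^+ n != 0 :> R by rewrite expf_neq0 // pnatr_eq0.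
rewrite factS natrM [4 ^+ n.+1]exprS -[n.+2%:R]natr1 -[n.+1%:R]natr1.
have n1_neq0 : n%:R + 1 != 0 :> R by rewrite natr1 pnatr_eq0.
have n2_neq0 : n%:R + 1 + 1 != 0 :> R by rewrite !natr1 pnatr_eq0.
move: rfact_neq0 fact_neq0 pow4_neq0.
move: (rfact _) (n.+1`!%:R) (4 ^+ n) (\sum_(0 <= j < n) _).
move=> G F P T G_neq0 F_neq0 P_neq0.
field; rewrite G_neq0 F_neq0 P_neq0 n1_neq0 n2_neq0 /=.
by apply: lt0r_neq0; lra.
Qed.

End ClosedForm.

Theorem theorem1 (R : realType) (n : nat) (hn : (0 < n)%N) :
  \sum_(0 <= k < n) (('C(n, k))%:R ^+ 2 : R)^-1 =
  (n.+1)`!%:R * (n.+1)%:R ^+ 2 / (rfact (n%:R + 3 / 2) * 4 ^+ n) *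
  \sum_(0 <= j < n)
    ((3 * j%:R ^+ 3 + 12 * j%:R ^+ 2 + 18 * j%:R + 10) * 4 ^+ j
       * rfact (j%:R + 3 / 2 : R)
     / ((j.+1)%:R ^+ 2 * (j.+1)`!%:R * (j.+2)%:R ^+ 3)).
Proof.
pose a (m : nat) : R := 2 * (2 * m%:R + 5) * m.+1%:R ^+ 2.
have a_neq0 m : a m != 0.
  by rewrite /a !mulf_neq0 ?expf_neq0 ?pnatr_eq0.
apply: (first_order_recurrence_uniq a_neq0 (@inv_binom_sq_sumS R)
  (@inv_binom_sq_closed_formS R)).
by rewrite /inv_binom_sq_sum /inv_binom_sq_closed_form !big_geq // mulr0.
Qed.
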